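(* Let $r\ge 2$, $\alpha=2^r-1$, $\beta=2^{r-1}(2^r-1)$, let $\mathcal{C}\subseteq\mathbb{Z}_2^\alpha\times\mathbb{Z}_4^\beta$ be a $\mathbb{Z}_2\mathbb{Z}_4$-additive 1-perfect code and $D=\mathcal{C}^\perp$. Then every nonzero codeword of $D$ has weight $2^{2r-1}$.
   Context: A $\mathbb{Z}_2\mathbb{Z}_4$-additive code is an additive subgroup of $\mathbb{Z}_2^\alpha\times\mathbb{Z}_4^\beta$; vectors are $\mathbf{u}=(u\mid u')$ with $u\in\mathbb{Z}_2^\alpha$, $u'\in\mathbb{Z}_4^\beta$. The weight is $w(\mathbf{u})=w_H(u)+w_L(u')$ (Hamming weight plus Lee weight, Lee weights of $0,1,2,3$ being $0,1,2,1$). The Gray map $\phi:\mathbb{Z}_4\to\mathbb{Z}_2^2$ is $0\mapsto(0,0),1\mapsto(0,1),2\mapsto(1,1),3\mapsto(1,0)$, $\Phi(u\mid u')=(u\mid\phi(u'_1),\dots,\phi(u'_\beta))$. A binary code $C\subseteq\mathbb{Z}_2^n$ is 1-perfect if the Hamming balls of radius 1 around its codewords partition $\mathbb{Z}_2^n$; a $\mathbb{Z}_2\mathbb{Z}_4$-additive code is 1-perfect if its Gray image is. The dual is $\mathcal{C}^\perp=\{\mathbf{v}:\mathbf{u}\cdot\mathbf{v}=0\ \forall\mathbf{u}\in\mathcal{C}\}$ with $\mathbf{u}\cdot\mathbf{v}=2\sum_{i=1}^\alpha u_iv_i+\sum_{j=1}^\beta u'_jv'_j\in\mathbb{Z}_4$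 (binary entries read as $0,1\in\mathbb{Z}_4$). *)

From mathcomp Require Import all_boot all_algebra.
Set Implicit Arguments. Unset Strict Implicit. Unset Printing Implicit Defensive.
Import GRing.Theory.
Local Open Scope ring_scope.

Notation Z2Z4 a b := ('rV['Z_2]_a * 'rV['Z_4]_b)%type.

(* additive code = additive subgroup (nonempty subset closed under +;
   in a finite group this is equivalent to being a subgroup) *)
Definition additive_code a b (C : {set Z2Z4 a b}) : Prop :=
  (0 : Z2Z4 a b) \in C /\ (forall u v, u \in C -> v \in C -> u + v \in C).

Definition wH n (x : 'rV['Z_2]_n) : nat := #|[set i | x ord0 i != 0]|.

Definition wL (x : 'Z_4) : nat := minn (x : nat) (4 - x)%N.

Definition wt a b (v : Z2Z4 a b) : nat :=
  (wH v.1 + \sum_(j < b) wL (v.2 ord0 j))%N.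

(* Gray map phi : Z_4 -> Z_2^2 : 0->(0,0), 1->(0,1), 2->(1,1), 3->(1,0) *)
Definition gray1 (x : 'Z_4) : 'Z_2 := ((2 <= (x : nat))%N : nat)%:R.
Definition gray2 (x : 'Z_4) : 'Z_2 :=
  (((x : nat) == 1%N) || ((x : nat) == 2%N) : nat)%:R.

(* Phi(u | u') = (u | phi(u'_1), ..., phi(u'_b)), coordinates in order *)
Definition Phi a b (v : Z2Z4 a b) : 'rV['Z_2]_(a + b * 2) :=
  row_mx v.1 (mxvec (\matrix_(j < b, c < 2)
     (if c == ord0 then gray1 (v.2 ord0 j) else gray2 (v.2 ord0 j)))).

Definition gray_image a b (C : {set Z2Z4 a b}) : {set 'rV['Z_2]_(a + b * 2)} :=
  (@Phi a b) @: C.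

(* binary 1-perfect code: radius-1 Hamming balls around codewords
   partition Z_2^n, i.e. every vector lies in exactly one such ball *)
Definition perfect1 n (C : {set 'rV['Z_2]_n}) : Prop :=
  forall x : 'rV['Z_2]_n, #|[set c in C | (wH (x - c) <= 1)%N]| = 1%N.

Definition Z2Z4_perfect1 a b (C : {set Z2Z4 a b}) : Prop :=
  perfect1 (gray_image C).

(* inner product in Z_4; binary entries read as 0,1 in Z_4 *)
Definition ip a b (u v : Z2Z4 a b) : 'Z_4 :=
  2 * (\sum_(i < a) (((u.1 ord0 i : nat) * (v.1 ord0 i : nat))%N)%:R)
  + \sum_(j < b) u.2 ord0 j * v.2 ord0 j.

Definition dual a b (C : {set Z2Z4 a b}) : {set Z2Z4 a b} :=
  [set v | [forall u in C, ip u v == 0]].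

From mathcomp Require Import all_boot all_algebra.
From mathcomp Require Import zify ring.
Set Implicit Arguments. Unset Strict Implicit. Unset Printing Implicit Defensive.
Import GRing.Theory Num.Theory.
Local Open Scope ring_scope.

(* For v in the dual of C, x |-> i ^ <x, v> is a character of Z_2^a x Z_4^b
   that is trivial on C; [chi4 (ip x v)] is its real part.  Because the radius-1
   balls around C tile the space and the inner product is additive in x, the sum
   of this real part over the whole space is #|C| times its sum over the ball
   around 0, and the latter is 1 + a + 2b - 2 wt(v).  If v != 0 some y has
   <y, v> = 2, so translating by y negates the total sum, which therefore
   vanishes: 2 wt(v) = 1 + a + 2b = 2 ^ (2r). *)

Section RowWeight.

Variables (R : pzRingType) (w : R -> nat).
Hypothesis w_eq0 : forall z, (w z == 0%N) = (z == 0).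

Lemma sum_row_weight_eq0 n (x : 'rV[R]_n) : (\sum_j w (x ord0 j) == 0)%N = (x == 0).
Proof.
rewrite sum_nat_eq0; apply/forallP/eqP => [x0|-> j]; last by rewrite mxE w_eq0 eqxx.
by apply/rowP => j; apply/eqP; rewrite mxE -w_eq0; exact: (x0 j).
Qed.

Lemma sum_row_weight_eq1 n (x : 'rV[R]_n) : (\sum_j w (x ord0 j))%N = 1%N ->
  exists j, w (x ord0 j) = 1%N /\ x = x ord0 j *: delta_mx ord0 j.
Proof.
move/eqP/sum_nat_eq1 => [j [_ wj1 w_other]]; exists j; split=> //.
apply/rowP => k; rewrite !mxE eqxx /=.
have [-> | kj] := eqVneq k j; first by rewrite mulr1.
by rewrite mulr0; apply/eqP; rewrite -w_eq0 w_other.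
Qed.

Lemma sum_row_weight_delta n (c : R) (i : 'I_n) :
  (\sum_j w ((c *: delta_mx ord0 i : 'rV[R]_n) ord0 j))%N = w c.
Proof.
have w0 : w 0 = 0%N by apply/eqP; rewrite w_eq0.
rewrite (bigD1 i) //= big1 => [|j ji]; first by rewrite !mxE !eqxx mulr1 addn0.
by rewrite !mxE (negbTE ji) mulr0.
Qed.

End RowWeight.

Lemma wH_sum n (x : 'rV['Z_2]_n) : wH x = (\sum_j (x ord0 j != 0%R : nat))%N.
Proof.
rewrite /wH -sum1_card big_mkcond; apply: eq_bigr => j _.
by rewrite inE; case: (_ != 0).
Qed.

Lemma nat_neq0_eq0 (R : zmodType) (z : R) : ((z != 0 : nat) == 0%N) = (z == 0).
Proof. by case: (z == 0). Qed.

Lemma wH_eq0 n (x : 'rV['Z_2]_n) : (wH x == 0%N) = (x == 0).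
Proof. by rewrite wH_sum (@sum_row_weight_eq0 _ (fun z => (z != 0 : nat)) (@nat_neq0_eq0 _)). Qed.

Lemma Z2_neq0_eq1 (z : 'Z_2) : z != 0 -> z = 1.
Proof. by case: z => [[|[|m]] Hm] //= _; apply/val_inj. Qed.

Lemma wH_eq1 n (x : 'rV['Z_2]_n) : wH x = 1%N -> exists i, x = delta_mx ord0 i.
Proof.
rewrite wH_sum => /(@sum_row_weight_eq1 _ (fun z => (z != 0 : nat)) (@nat_neq0_eq0 _)) [i [xi1 ->]].
by exists i; rewrite (@Z2_neq0_eq1 (x ord0 i)) ?scale1r //; case: (x ord0 i != 0) xi1.
Qed.

Lemma wL_eq0 (z : 'Z_4) : (wL z == 0%N) = (z == 0).
Proof. by case: z => [[|[|[|[|m]]]] Hm]. Qed.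

Lemma wL_eq1 (z : 'Z_4) : wL z = 1%N -> z = (-1) ^+ (z != 1).
Proof. by case: z => [[|[|[|[|m]]]] Hm] //= _; apply/val_inj. Qed.

Lemma wt_eq0 a b (y : Z2Z4 a b) : (wt y == 0%N) = (y == 0).
Proof. by case: y => y1 y2; rewrite /wt addn_eq0 wH_eq0 (sum_row_weight_eq0 wL_eq0). Qed.

Lemma wt0 a b : wt (0 : Z2Z4 a b) = 0%N.
Proof. by apply/eqP; rewrite wt_eq0. Qed.

Lemma gray_dist (z z' : 'Z_4) :
  (((gray1 z - gray1 z')%R != 0%R : nat) + ((gray2 z - gray2 z')%R != 0%R : nat))%N = wL (z - z').
Proof.
case: z => [[|[|[|[|m]]]] Hm]; case: z' => [[|[|[|[|k]]]] Hk]; try by [].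
all: by apply/eqP; vm_compute.
Qed.

Lemma wH_row_mx m n (x : 'rV['Z_2]_m) (y : 'rV['Z_2]_n) :
  wH (row_mx x y) = (wH x + wH y)%N.
Proof.
by rewrite !wH_sum big_split_ord; congr (_ + _)%N; apply: eq_bigr => i _;
  rewrite ?row_mxEl ?row_mxEr.
Qed.

Lemma wH_mxvec m n (A : 'M['Z_2]_(m, n)) :
  wH (mxvec A) = (\sum_i \sum_j (A i j != 0%R : nat))%N.
Proof.
rewrite wH_sum (reindex _ (curry_mxvec_bij _ _)) pair_big /=.
by apply: eq_bigr => -[i j] _; rewrite mxvecE.
Qed.

Lemma wH_Phi_sub a b (x y : Z2Z4 a b) : wH (Phi x - Phi y) = wt (x - y).
Proof.
rewrite /Phi opp_row_mx add_row_mx wH_row_mx -linearB wH_mxvec.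
congr (_ + _)%N; apply: eq_bigr => j _.
by rewrite big_ord_recr big_ord_recr big_ord0 !mxE /= gray_dist.
Qed.

Lemma Phi_inj a b : injective (@Phi a b).
Proof.
move=> x y Pxy; apply/eqP; rewrite -subr_eq0 -wt_eq0 -wH_Phi_sub Pxy subrr.
by rewrite wH_eq0.
Qed.

Lemma perfect1_ball a b (C : {set Z2Z4 a b}) : Z2Z4_perfect1 C ->
  forall x, #|[set c in C | (wt (x - c)%R <= 1)%N]| = 1%N.
Proof.
move=> C_perfect x; rewrite -[RHS](C_perfect (Phi x)) /gray_image.
suff -> : [set c in @Phi a b @: C | (wH (Phi x - c)%R <= 1)%N] =
          @Phi a b @: [set c in C | (wt (x - c)%R <= 1)%N].
  by rewrite card_imset //; apply: Phi_inj.
apply/setP => z; rewrite inE; apply/andP/imsetP.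
  by case=> /imsetP[c cC ->]; rewrite wH_Phi_sub => cx; exists c; rewrite // inE cC.
by case=> c; rewrite inE => /andP[cC cx] ->; rewrite imset_f // wH_Phi_sub.
Qed.

Lemma double_mulZ2Dl (p q c : 'Z_2) :
  (2 * (((p + q)%R : nat) * c)%N%:R : 'Z_4) = 2 * (p * c)%N%:R + 2 * (q * c)%N%:R.
Proof.
case: p => [[|[|m]] Hm]; case: q => [[|[|k]] Hk]; case: c => [[|[|l]] Hl]; try by [].
all: by apply/eqP; vm_compute.
Qed.

Lemma ipDl a b (x y v : Z2Z4 a b) : ip (x + y) v = ip x v + ip y v.
Proof.
rewrite /ip addrACA !mulr_sumr -!big_split /=; congr (_ + _).
  by apply: eq_bigr => i _; rewrite mxE double_mulZ2Dl.
by apply: eq_bigr => j _; rewrite mxE mulrDl.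
Qed.

Lemma ip0l a b (v : Z2Z4 a b) : ip 0 v = 0.
Proof. by rewrite /ip !big1 ?mulr0 ?addr0 // => i _; rewrite mxE ?mul0r. Qed.

(* The real part of [i ^ z]. *)
Definition chi4 (z : 'Z_4) : int := if z == 0 then 1 else if z == 2 then -1 else 0.

Lemma chi4_add2 z : chi4 (z + 2) = - chi4 z.
Proof. by case: z => [[|[|[|[|m]]]] Hm]; try by []; apply/eqP; vm_compute. Qed.

Lemma chi4_double (x : 'Z_2) : chi4 (2 * (x : nat)%:R) = 1 - 2 * (x != 0 : nat)%:R.
Proof. by case: x => [[|[|m]] Hm]. Qed.

Lemma chi4_addN z : chi4 z + chi4 (- z) = 2 - 2 * (wL z)%:R.
Proof. by case: z => [[|[|[|[|m]]]] Hm]; try by []; apply/eqP; vm_compute. Qed.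

Section UnitVectors.

Variables a b : nat.

Definition unit_vec (t : 'I_a + 'I_b * bool) : Z2Z4 a b :=
  match t with
  | inl i => (delta_mx ord0 i, 0)
  | inr (j, s) => (0, (-1) ^+ s *: delta_mx ord0 j)
  end.

Lemma unit_vec_inj : injective unit_vec.
Proof.
case=> [i|[j s]] [i'|[j' s']] /eqP; rewrite xpair_eqE => /andP[/eqP e1 /eqP e2].
- by move/rowP/(_ i): e1; rewrite !mxE eqxx /=; case: eqP => [->|].
- by move/rowP/(_ i): e1; rewrite !mxE eqxx.
- by move/rowP/(_ i'): e1; rewrite !mxE eqxx.
move/rowP/(_ j): e2; rewrite !mxE !eqxx /= mulr1.
case: eqP => [<-|_]; last by rewrite mulr0; case: s.
by case: s; case: s'.
Qed.

Lemma wt_unit_vec t : wt (unit_vec t) = 1%N.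
Proof.
rewrite /wt; case: t => [i|[j s]] /=.
  rewrite wH_sum -[delta_mx _ _]scale1r.
  by rewrite (sum_row_weight_delta (@nat_neq0_eq0 _)) oner_neq0 big1 // => j _; rewrite mxE.
have /eqP -> : wH (0 : 'rV['Z_2]_a) == 0%N by rewrite wH_eq0.
by rewrite (sum_row_weight_delta wL_eq0); case: s.
Qed.

Lemma wt_eq1 y : wt y = 1%N -> exists t, y = unit_vec t.
Proof.
case: y => y1 y2; rewrite /wt /= => /eqP; rewrite addn_eq1.
case/orP => [/andP[/eqP /wH_eq1[i ->]] | /andP[]]; rewrite ?(sum_row_weight_eq0 wL_eq0).
  by move=> /eqP ->; exists (inl i).
rewrite wH_eq0 => /eqP -> /eqP /(sum_row_weight_eq1 wL_eq0)[j [/wL_eq1 y2j ->]].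
by exists (inr (j, y2 ord0 j != 1)); rewrite /= -y2j.
Qed.

Lemma ip_unit_vec_inl i (v : Z2Z4 a b) :
  ip (unit_vec (inl i)) v = 2 * (v.1 ord0 i : nat)%:R.
Proof.
rewrite /ip (bigD1 i) //= !mxE !eqxx mul1n big1 => [|k ki]; last by rewrite !mxE (negbTE ki).
by rewrite big1 ?addr0 // => j _; rewrite mxE mul0r.
Qed.

Lemma ip_unit_vec_inr j s (v : Z2Z4 a b) :
  ip (unit_vec (inr (j, s))) v = (-1) ^+ s * v.2 ord0 j.
Proof.
rewrite /ip big1 => [|i _]; last by rewrite mxE.
rewrite (bigD1 j) //= !mxE !eqxx mulr1 big1 ?mulr0 ?add0r ?addr0 // => k kj.
by rewrite !mxE (negbTE kj) mulr0 mul0r.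
Qed.

Lemma unit_vec_sphere : [set y : Z2Z4 a b | (wt y <= 1)%N & y != 0] = unit_vec @: setT.
Proof.
apply/setP => y; rewrite inE; apply/andP/imsetP => [[y_le1 y_neq0] | [t _ ->]].
  have /wt_eq1[t ->] : wt y = 1%N by move: y_le1 y_neq0; rewrite -wt_eq0; case: (wt y) => [|[]].
  by exists t.
by rewrite -wt_eq0 wt_unit_vec.
Qed.

Lemma sum_wt_le1 (V : nmodType) (F : Z2Z4 a b -> V) :
  \sum_(y | (wt y <= 1)%N) F y = F 0 + \sum_t F (unit_vec t).
Proof.
rewrite (bigD1 (0 : Z2Z4 a b)) ?wt0 //=; congr (_ + _).
rewrite (eq_bigl (fun y => y \in unit_vec @: setT)) => [|y]; last first.
  by rewrite -unit_vec_sphere inE.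
rewrite big_imset /=; last by move=> ? ? _ _; apply: unit_vec_inj.
by apply: eq_bigl => t; rewrite inE.
Qed.

Lemma sum_chi4_ip_ball (v : Z2Z4 a b) :
  \sum_(y | (wt y <= 1)%N) chi4 (ip y v) = (1 + a + 2 * b)%N%:R - 2 * (wt v)%:R.
Proof.
rewrite sum_wt_le1 ip0l big_sumType.
rewrite (eq_bigr (fun p => chi4 (ip (unit_vec (inr (p.1, p.2))) v))) => [|[]//].
rewrite -(pair_bigA _ (fun j s => chi4 (ip (unit_vec (inr (j, s))) v))).
under eq_bigr do rewrite ip_unit_vec_inl chi4_double.
under [X in _ + (_ + X)]eq_bigr do
  rewrite big_bool !ip_unit_vec_inr /= expr1 expr0 mulN1r mul1r addrC chi4_addN.
rewrite !sumrB !sumr_const !card_ord -!mulr_sumr -!natr_sum -wH_sum /wt.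
by rewrite !natrD; ring.
Qed.

End UnitVectors.

Section CharacterSums.

Variables (a b : nat) (v : Z2Z4 a b).

Lemma sum_chi4_ip_tiling (C : {set Z2Z4 a b}) :
  (forall x, #|[set c in C | (wt (x - c)%R <= 1)%N]| = 1%N) ->
  {in C, forall c, ip c v = 0} ->
  \sum_(x : Z2Z4 a b) chi4 (ip x v) = (\sum_(y : Z2Z4 a b | (wt y <= 1)%N) chi4 (ip y v)) *+ #|C|.
Proof.
move=> C_tiles C_orth.
transitivity (\sum_(x : Z2Z4 a b) \sum_(c in [set c in C | (wt (x - c)%R <= 1)%N]) chi4 (ip x v)).
  by apply: eq_bigr => x _; rewrite sumr_const C_tiles.
rewrite (exchange_big_dep (fun c => c \in C)) => [|x c _]; last by rewrite inE => /andP[].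
rewrite -sumr_const; apply: eq_bigr => c cC /=.
rewrite (reindex_inj (addIr c)); apply: eq_big => [y | y _]; first by rewrite inE cC addrK.
by rewrite ipDl (C_orth c cC) addr0.
Qed.

Lemma sum_chi4_ip_eq0 y : ip y v = 2 -> \sum_(x : Z2Z4 a b) chi4 (ip x v) = 0.
Proof.
move=> yv2; apply/eqP; rewrite -eqNr; apply/eqP.
rewrite -sumrN [RHS](reindex_inj (addIr y)); apply: eq_bigr => x _.
by rewrite ipDl yv2 chi4_add2.
Qed.

Lemma exists_ip_eq2 : v != 0 -> exists y, ip y v = 2.
Proof.
case: v => v1 v2; rewrite -[0]/(0, 0) xpair_eqE negb_and.
case/orP => [/rV0Pn[i vi] | /rV0Pn[j vj]].
  by exists (unit_vec (inl i)); rewrite ip_unit_vec_inl (Z2_neq0_eq1 vi) mulr1n mulr1.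
pose u : Z2Z4 a b := unit_vec (inr (j, false)).
have ip_u : ip u (v1, v2) = v2 ord0 j by rewrite ip_unit_vec_inr mul1r.
have [vj2 | vj_neq2] := eqVneq (v2 ord0 j) 2; first by exists u; rewrite ip_u.
exists (u + u); rewrite ipDl ip_u.
by move: vj vj_neq2; case: (v2 ord0 j) => [[|[|[|[|m]]]] Hm] //= _ _; apply/val_inj.
Qed.

End CharacterSums.

Lemma perfect1_dual_wt a b (C : {set Z2Z4 a b}) (v : Z2Z4 a b) :
  Z2Z4_perfect1 C -> v \in dual C -> v != 0 -> (2 * wt v)%N = (1 + a + 2 * b)%N.
Proof.
move=> /perfect1_ball C_tiles vC v_neq0.
have C_orth : {in C, forall c, ip c v = 0}.
  by move=> c cC; move: vC; rewrite inE => /forall_inP/(_ c cC)/eqP.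
have C_gt0 : (0 < #|C|)%N.
  have /card_gt0P[c] : (0 < #|[set c in C | (wt (0 - c)%R <= 1)%N]|)%N by rewrite C_tiles.
  by rewrite inE => /andP[cC _]; apply/card_gt0P; exists c.
have [y /sum_chi4_ip_eq0] := exists_ip_eq2 v_neq0.
rewrite (sum_chi4_ip_tiling C_tiles C_orth) sum_chi4_ip_ball => /eqP.
by rewrite mulrn_eq0 eqn0Ngt C_gt0 /= subr_eq0 -natrM eqr_nat => /eqP <-.
Qed.

Lemma perfect_Z2Z4_length r : (0 < r)%N ->
  (1 + (2 ^ r - 1) + 2 * (2 ^ r.-1 * (2 ^ r - 1)) = 2 * 2 ^ (2 * r - 1))%N.
Proof.
move=> r_gt0; have pow_r : (2 ^ r = 2 * 2 ^ r.-1)%N by rewrite -expnS prednK.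
have pow_2r : (2 ^ (2 * r - 1) = 2 * 2 ^ r.-1 * 2 ^ r.-1)%N.
  by rewrite -pow_r -expnD; congr (2 ^ _)%N; lia.
have : (0 < 2 ^ r.-1)%N by rewrite expn_gt0.
rewrite pow_2r pow_r; move: (2 ^ r.-1)%N => p.
nia.
Qed.

Theorem lemma3p3 (r : nat) (hr : (2 <= r)%N)
    (C : {set Z2Z4 (2 ^ r - 1) (2 ^ r.-1 * (2 ^ r - 1))}) :
  additive_code C -> Z2Z4_perfect1 C ->
  forall v, v \in dual C -> v != 0 -> wt v = (2 ^ (2 * r - 1))%N.
Proof.
move=> _ C_perfect v vC v_neq0; apply/eqP.
rewrite -(@eqn_pmul2l 2) // (perfect1_dual_wt C_perfect vC v_neq0).
by rewrite perfect_Z2Z4_length // ltnW.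
Qed.
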